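(* Let $U=U_1\times\cdots\times U_m\subset\mathbb{R}^m_+$ be a convex set with each $U_i\subseteq\mathbb{R}$, let $C\subseteq\mathbb{R}^m$ be a set, and let $\overline{U}=U\cap C$. Let $c\in\mathbb{R}^{n_1}$, $d\in\mathbb{R}^{n_2}$, and $a_i\in\mathbb{R}^{n_1}$, $g_i\in\mathbb{R}^{n_2}$ for $i\in[m]$. Define $$z_{\rm ro}=\inf_{x\in\mathbb{R}^{n_1},\,y\in\mathbb{R}^{n_2}}\{c^Tx+d^Ty:\ a_i^Tx+g_i^Ty\ge u_i\ \ \forall u\in U,\ \forall i\in[m]\},$$ $$z_{\rm cp}=\inf_{x\in\mathbb{R}^{n_1},\,y\in\mathbb{R}^{n_2}}\{c^Tx+d^Ty:\ a_i^Tx+g_i^Ty\ge u_i\ \ \forall u\in \overline{U},\ \forall i\in[m]\}.$$ Let $\rho_{\rm ro}=\rho\big(U^\downarrow,\Pi(\overline{U}^\downarrow)\big)$ and $\gamma_{\rm ro}=\gamma\big(U^\downarrow,\Pi(\overline{U}^\downarrow)\big)$. If $0<z_{\rm cp}\le z_{\rm ro}<\infty$, then $$\rho_{\rm ro}\le \frac{z_{\rm cp}}{z_{\rm ro}}\le \gamma_{\rm ro}.$$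
   Context: $[m]=\{1,\dots,m\}$. For $S\subseteq\mathbb{R}^m_+$, the down-hull is $S^\downarrow=\{t\in\mathbb{R}^m_+:\exists s\in S,\ t\le s\text{ componentwise}\}$. For $S\subseteq\mathbb{R}^m$, $\Pi_i(S)=\{u_i:\exists u\in S\text{ whose $i$-th coordinate is }u_i\}$ and $\Pi(S)=\Pi_1(S)\times\cdots\times\Pi_m(S)$. For a set $S$ and $r\ge0$, $rS=\{rx:x\in S\}$. For sets $S_1,S_2$: $\rho(S_1,S_2)=\max\{\rho\ge 0:\rho S_1\subseteq S_2\}$ and $\gamma(S_1,S_2)=\min\{\gamma\ge0: S_2\subseteq \gamma S_1\}$. *)

From HB Require Import structures.
From mathcomp Require Import all_boot all_order all_algebra.
From mathcomp Require Import all_classical all_reals all_analysis.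
Set Implicit Arguments. Unset Strict Implicit. Unset Printing Implicit Defensive.
Import Order.TTheory GRing.Theory Num.Theory.
Local Open Scope classical_set_scope.
Local Open Scope ring_scope.

Section Defs.
Variable R : realType.

Definition dotv (k : nat) (a x : 'rV[R]_k) : R := \sum_(i < k) a 0 i * x 0 i.

Definition orthant (m : nat) : set 'rV[R]_m := [set u | forall i, 0 <= u 0 i].

Definition downhull (m : nat) (S : set 'rV[R]_m) : set 'rV[R]_m :=
  [set t | orthant t /\ exists2 s, S s & forall i, t 0 i <= s 0 i].

Definition proj_i (m : nat) (S : set 'rV[R]_m) (i : 'I_m) : set R :=
  [set r | exists2 u, S u & u 0 i = r].

Definition Pi (m : nat) (S : set 'rV[R]_m) : set 'rV[R]_m :=
  [set u | forall i, proj_i S i (u 0 i)].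

Definition scaleset (m : nat) (r : R) (S : set 'rV[R]_m) : set 'rV[R]_m :=
  [set r *: x | x in S].

(* rho(S1,S2) = max{rho >= 0 : rho S1 ⊆ S2}, taken as a supremum in \bar R *)
Definition rho_of (m : nat) (S1 S2 : set 'rV[R]_m) : \bar R :=
  ereal_sup [set r%:E | r in [set r : R | 0 <= r /\ scaleset r S1 `<=` S2]].

(* gamma(S1,S2) = min{gamma >= 0 : S2 ⊆ gamma S1}, taken as an infimum in \bar R *)
Definition gamma_of (m : nat) (S1 S2 : set 'rV[R]_m) : \bar R :=
  ereal_inf [set g%:E | g in [set g : R | 0 <= g /\ S2 `<=` scaleset g S1]].

Definition robust_value (m n1 n2 : nat) (c : 'rV[R]_n1) (d : 'rV[R]_n2)
    (a : 'I_m -> 'rV[R]_n1) (g : 'I_m -> 'rV[R]_n2) (V : set 'rV[R]_m) : \bar R :=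
  ereal_inf [set (dotv c xy.1 + dotv d xy.2)%:E | xy in
    [set xy : 'rV[R]_n1 * 'rV[R]_n2 |
       forall u, V u -> forall i, u 0 i <= dotv (a i) xy.1 + dotv (g i) xy.2]].

End Defs.

From HB Require Import structures.
From mathcomp Require Import all_boot all_order all_algebra.
From mathcomp Require Import all_classical all_reals all_analysis.
Import Order.TTheory GRing.Theory Num.Theory.
Local Open Scope classical_set_scope.
Local Open Scope ring_scope.

(* The robust constraint of row i only sees how large the i-th coordinate of
   an uncertain vector can be.  So the robust value is monotone under
   coordinatewise domination of uncertainty sets; in particular U, U^down and
   Pi(U^down) give the same value when U lies in the orthant.  Moreover the
   feasible set of r V is r times that of V, so the value is positively
   homogeneous in V.  The inclusions rho U^down <= Pi(Ubar^down) <= gamma U^down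
   thus give rho z_ro <= z_cp <= gamma z_ro. *)

Section UncertaintySets.
Context {R : realType} {m : nat}.
Implicit Types (V W : set 'rV[R]_m).

Definition coord_dominated W V :=
  forall w, W w -> forall i, exists2 v, V v & w 0 i <= v 0 i.

Lemma coord_dominated_subset W V : W `<=` V -> coord_dominated W V.
Proof. by move=> WV w Ww i; exists w => //; exact: WV. Qed.

Lemma downhull_dominated V : coord_dominated (downhull V) V.
Proof. by move=> w [_ [v Vv wv]] i; exists v. Qed.

Lemma Pi_downhull_dominated V : coord_dominated (Pi (downhull V)) V.
Proof.
by move=> w Pw i; have [t [_ [v Vv tv]] <-] := Pw i; exists v.
Qed.

Lemma sub_downhull V : V `<=` @orthant R m -> V `<=` downhull V.
Proof. by move=> Vor v Vv; split; [exact: Vor | exists v]. Qed.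

Lemma sub_Pi V : V `<=` Pi V.
Proof. by move=> v Vv i; exists v. Qed.

End UncertaintySets.

Section RobustProgram.
Context {R : realType} {m n1 n2 : nat}.
Context {c : 'rV[R]_n1} {d : 'rV[R]_n2}.
Context {a : 'I_m -> 'rV[R]_n1} {g : 'I_m -> 'rV[R]_n2}.
Implicit Types (V W : set 'rV[R]_m) (xy : 'rV[R]_n1 * 'rV[R]_n2).

Definition lin_form (p : 'rV[R]_n1) (q : 'rV[R]_n2) xy := dotv p xy.1 + dotv q xy.2.

Lemma lin_formZ p q r xy : lin_form p q (r *: xy) = r * lin_form p q xy.
Proof.
have dotvZ k (e x : 'rV[R]_k) : dotv e (r *: x) = r * dotv e x.
  by rewrite /dotv mulr_sumr; apply: eq_bigr => i _; rewrite mxE mulrCA.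
by rewrite /lin_form !dotvZ mulrDr.
Qed.

Lemma lin_form0 p q : lin_form p q 0 = 0.
Proof. by rewrite -(scale0r (0 : 'rV[R]_n1 * 'rV[R]_n2)) lin_formZ mul0r. Qed.

Definition robust_feasible V :=
  [set xy | forall u, V u -> forall i, u 0 i <= lin_form (a i) (g i) xy].

Lemma robust_valueE V :
  robust_value c d a g V = ereal_inf [set (lin_form c d xy)%:E | xy in robust_feasible V].
Proof. by []. Qed.

Lemma robust_feasible_dominated W V :
  coord_dominated W V -> robust_feasible V `<=` robust_feasible W.
Proof.
move=> WV xy Fxy w Ww i; have [v Vv wv] := WV w Ww i.
exact: le_trans wv (Fxy v Vv i).
Qed.

Lemma robust_value_dominated W V :
  coord_dominated W V -> (robust_value c d a g W <= robust_value c d a g V)%E.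
Proof.
by move=> WV; rewrite !robust_valueE; apply/ereal_inf_le_tmp/image_subset/robust_feasible_dominated.
Qed.

Lemma robust_feasible_scaleset r V xy : 0 < r ->
  robust_feasible (scaleset r V) xy <-> robust_feasible V (r^-1 *: xy).
Proof.
move=> r_gt0; split=> Fxy.
- move=> u Vu i; rewrite lin_formZ ler_pdivlMl //.
  by have := Fxy (r *: u) (ex_intro2 _ _ u Vu erefl) i; rewrite mxE.
- by move=> _ [u Vu <-] i; rewrite mxE -ler_pdivlMl // -lin_formZ; exact: Fxy.
Qed.

Lemma robust_value_scaleset r V : 0 < r ->
  robust_value c d a g (scaleset r V) = (r%:E * robust_value c d a g V)%E.
Proof.
move=> r_gt0; rewrite !robust_valueE -ereal_inf_pZl //; congr ereal_inf.
apply/seteqP; split.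
- move=> _ [xy /(robust_feasible_scaleset _ _ _ r_gt0) Fxy <-].
  exists (lin_form c d (r^-1 *: xy))%:E; first by exists (r^-1 *: xy).
  by rewrite -EFinM lin_formZ mulrA mulfV ?gt_eqF // mul1r.
- move=> _ [_ [xy Fxy <-] <-]; exists (r *: xy); last by rewrite lin_formZ EFinM.
  by apply/robust_feasible_scaleset => //; rewrite scalerA mulVf ?gt_eqF // scale1r.
Qed.

Lemma robust_value_scaleset0 V : (robust_value c d a g (scaleset 0 V) <= 0)%E.
Proof.
rewrite robust_valueE; apply: ge_ereal_inf; exists 0%:E => //.
exists 0; last by rewrite lin_form0.
by move=> _ [u _ <-] i; rewrite scale0r mxE lin_form0.
Qed.

Lemma robust_value_ge_scaled r V W : V `<=` @orthant R m -> 0 < r ->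
  scaleset r (downhull V) `<=` Pi (downhull W) ->
  (r%:E * robust_value c d a g V <= robust_value c d a g W)%E.
Proof.
move=> Vor r_gt0 rVW.
have V_le_dV : (robust_value c d a g V <= robust_value c d a g (downhull V))%E.
  exact/robust_value_dominated/coord_dominated_subset/sub_downhull.
apply: le_trans (lee_wpmul2l (ltW r_gt0 : (0 <= r%:E)%E) V_le_dV) _.
rewrite -robust_value_scaleset //.
apply: (@le_trans _ _ (robust_value c d a g (Pi (downhull W)))).
  exact/robust_value_dominated/coord_dominated_subset.
exact/robust_value_dominated/Pi_downhull_dominated.
Qed.

Lemma robust_value_le_scaled r V W : W `<=` @orthant R m -> 0 <= r ->
  Pi (downhull W) `<=` scaleset r (downhull V) ->
  (robust_value c d a g W <= r%:E * robust_value c d a g V)%E.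
Proof.
move=> Wor r_ge0 WrV.
have W_sub_PdW : W `<=` Pi (downhull W) := subset_trans (sub_downhull _ Wor) (sub_Pi _).
apply: (@le_trans _ _ (robust_value c d a g (Pi (downhull W)))).
  exact/robust_value_dominated/coord_dominated_subset.
apply: (@le_trans _ _ (robust_value c d a g (scaleset r (downhull V)))).
  exact/robust_value_dominated/coord_dominated_subset.
have [->|r_neq0] := eqVneq r 0; first by rewrite mul0e; exact: robust_value_scaleset0.
rewrite robust_value_scaleset ?lt_def ?r_neq0 //.
exact/lee_wpmul2l/robust_value_dominated/downhull_dominated.
Qed.

End RobustProgram.

Theorem theorem1 (R : realType) (m n1 n2 : nat)
  (U : set 'rV[R]_m) (Ui : 'I_m -> set R) (C : set 'rV[R]_m)
  (c : 'rV[R]_n1) (d : 'rV[R]_n2)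
  (a : 'I_m -> 'rV[R]_n1) (g : 'I_m -> 'rV[R]_n2) :
  U = [set u | forall i, Ui i (u 0 i)] ->
  U `<=` @orthant R m ->
  convex_set (U : set (convex_lmodType 'rV[R]_m)) ->
  let Ubar := U `&` C in
  let z_ro := robust_value c d a g U in
  let z_cp := robust_value c d a g Ubar in
  (0 < z_cp)%E -> (z_cp <= z_ro)%E -> (z_ro < +oo)%E ->
  (rho_of (downhull U) (Pi (downhull Ubar)) <= (fine z_cp / fine z_ro)%:E)%E /\
  ((fine z_cp / fine z_ro)%:E <= gamma_of (downhull U) (Pi (downhull Ubar)))%E.
Proof.
move=> _ Uor _ Ubar z_ro z_cp cp_gt0 cp_le_ro ro_fin.
have Ubar_or : Ubar `<=` @orthant R m by apply: subset_trans Uor; exact: subIsetl.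
have ro_gt0 : (0 < z_ro)%E by exact: lt_le_trans cp_le_ro.
have zcE : z_cp = (fine z_cp)%:E by rewrite fineK // ge0_fin_numE ?ltW // (le_lt_trans cp_le_ro).
have zrE : z_ro = (fine z_ro)%:E by rewrite fineK // ge0_fin_numE ?ltW.
have zc_gt0 : 0 < fine z_cp by rewrite -lte_fin -zcE.
have zr_gt0 : 0 < fine z_ro by rewrite -lte_fin -zrE.
split.
- apply: ge_ereal_sup => _ [r [r_ge0 rUUbar] <-]; rewrite lee_fin ler_pdivlMr //.
  have [->|r_neq0] := eqVneq r 0; first by rewrite mul0r ltW.
  rewrite -lee_fin EFinM -zrE -zcE.
  by apply: robust_value_ge_scaled rUUbar => //; rewrite lt_def r_neq0.
- apply: le_ereal_inf_tmp => _ [r [r_ge0 UbarrU] <-]; rewrite lee_fin ler_pdivrMr //.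
  by rewrite -lee_fin EFinM -zrE -zcE; apply: robust_value_le_scaled UbarrU.
Qed.
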